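(* Under Assumption 1, for any samples $\theta_1,\dots,\theta_M\in\Theta$, the mapping $F$ is monotone on $\mathcal X\times\Delta_M$, i.e. $(u-v)^\top(F(u)-F(v))\ge0$ for all $u,v\in\mathcal X\times\Delta_M$.
   Context: Let $\mathcal N=\{1,\dots,N\}$; agent $i$ chooses $x_i\in\mathcal X_i\subset\mathbb R^n$, $x=(x_i)_{i}\in\mathcal X=\mathcal X_1\times\cdots\times\mathcal X_N\subset\mathbb R^{nN}$, $x_{-i}=(x_j)_{j\ne i}$. Let $\Theta$ be a set, $f_i:\mathbb R^{nN}\to\mathbb R$, $g:\mathbb R^{nN}\times\Theta\to\mathbb R$. Assumption 1: (i) for every $\theta\in\Theta$ and every $x_{-i}\in\prod_{j\ne i}\mathcal X_j$, $f_i(\cdot,x_{-i})+g(\cdot,x_{-i},\theta)$ is convex and continuously differentiable, and each $\mathcal X_i$ is nonempty, compact and convex; (ii) for every $\theta$ and $i$, $g(\cdot,\theta)$ and $f_i$ are twice differentiable on an open convex set containing $\mathcal X$; (iii) there are $\chi^f,\chi^g\in\mathbb R$ with $\chi^f+\chi^g\ge0$ such that for all $u,v\in\mathbb R^{nN}$ and $\theta\in\Theta$: $(u-v)^\top\big((\nabla_{u_i}f_i(u))_{i}-(\nabla_{v_i}f_i(v))_{i}\big)\ge\chi^f\|u-v\|^2$ and $(u-v)^\top(\nabla_u g(u,\theta)-\nabla_v g(v,\theta))\ge\chi^g\|u-v\|^2$. Given samples $\theta_1,\dots,\theta_M$: $\Delta_M=\{y\in\mathbb R^M: y\ge0,\ \sum_m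 y_m=1\}$, $\hat g(x,y)=\sum_{m=1}^M y_m g(x,\theta_m)$, and $F(x,y)=\big((\nabla_{x_i}f_i(x)+\nabla_{x_i}\hat g(x,y))_{i\in\mathcal N},\ -(\nabla_{y_m}\hat g(x,y))_{m=1}^M\big)\in\mathbb R^{nN+M}$. *)

From mathcomp Require Import ssreflect ssrfun ssrbool eqtype ssrnat seq choice fintype.
From Stdlib Require Import Reals.
Set Implicit Arguments.
Unset Strict Implicit.
Open Scope R_scope.

Definition sumF (I : finType) (h : I -> R) : R :=
  foldr Rplus 0 (map h (enum I)).

Definition dotF (I : finType) (u v : I -> R) : R := sumF (fun j => u j * v j).
Definition nrm2F (I : finType) (u : I -> R) : R := dotF u u.
Definition normF (I : finType) (u : I -> R) : R := sqrt (nrm2F u).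
Definition subF (I : finType) (u v : I -> R) : I -> R := fun j => u j - v j.

Definition has_grad (I : finType) (h : (I -> R) -> R) (x G : I -> R) : Prop :=
  forall eps, 0 < eps -> exists delta, 0 < delta /\
    forall y, normF (subF y x) < delta ->
      Rabs (h y - h x - dotF G (subF y x)) <= eps * normF (subF y x).

Definition cont_map_at (I J : finType) (G : (I -> R) -> (J -> R)) (x : I -> R) : Prop :=
  forall eps, 0 < eps -> exists delta, 0 < delta /\
    forall y, normF (subF y x) < delta -> normF (subF (G y) (G x)) < eps.

Definition C1 (I : finType) (h : (I -> R) -> R) : Prop :=
  exists G : (I -> R) -> (I -> R),
    (forall x, has_grad h x (G x)) /\ (forall x, cont_map_at G x).

Definition twice_diff_on (I : finType) (U : (I -> R) -> Prop) (h : (I -> R) -> R) : Prop :=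
  exists G : (I -> R) -> (I -> R),
    (forall x, U x -> has_grad h x (G x)) /\
    (forall x, U x -> forall j : I, exists H, has_grad (fun y => G y j) x H).

Definition convex_set (I : finType) (S : (I -> R) -> Prop) : Prop :=
  forall x y t, S x -> S y -> 0 <= t <= 1 -> S (fun j => t * x j + (1 - t) * y j).

Definition convex_fun (I : finType) (h : (I -> R) -> R) : Prop :=
  forall x y t, 0 <= t <= 1 ->
    h (fun j => t * x j + (1 - t) * y j) <= t * h x + (1 - t) * h y.

Definition open_set (I : finType) (U : (I -> R) -> Prop) : Prop :=
  forall x, U x -> exists r, 0 < r /\ forall y, normF (subF y x) < r -> U y.

(* Compactness in R^I (sequential compactness, equivalent to closed+bounded). *)
Definition compact_set (I : finType) (S : (I -> R) -> Prop) : Prop :=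
  forall u : nat -> (I -> R), (forall k, S (u k)) ->
    exists (phi : nat -> nat) (l : I -> R),
      (forall k, ltn (phi k) (phi k.+1)) /\ S l /\
      Un_cv (fun k => normF (subF (u (phi k)) l)) 0.

Definition nonempty_set (I : finType) (S : (I -> R) -> Prop) : Prop := exists x, S x.

(* Joint action profiles x in R^{nN}, indexed by (agent i, coordinate k). *)
Notation prof N n := (('I_N * 'I_n)%type -> R).

Definition block (N n : nat) (x : prof N n) (i : 'I_N) : 'I_n -> R :=
  fun k => x (i, k).

(* upd x i z = (z, x_{-i}) *)
Definition upd (N n : nat) (x : prof N n) (i : 'I_N) (z : 'I_n -> R) : prof N n :=
  fun p => if p.1 == i then z p.2 else x p.

Definition in_prod (N n : nat) (Xs : 'I_N -> ('I_n -> R) -> Prop) (x : prof N n) : Prop :=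
  forall i, Xs i (block x i).

Definition simplex (M : nat) (y : 'I_M -> R) : Prop :=
  (forall m, 0 <= y m) /\ sumF y = 1.

(* Assumption 1.  pf i x stands for nabla_{x_i} f_i(x) and dg x th for
   nabla_x g(x, th); they are tied to f, g by the hypotheses below. *)
Definition Assumption1 (N n : nat) (Th : Type)
  (Xs : 'I_N -> ('I_n -> R) -> Prop)
  (f : 'I_N -> prof N n -> R) (g : prof N n -> Th -> R)
  (pf : 'I_N -> prof N n -> ('I_n -> R)) (dg : prof N n -> Th -> prof N n) : Prop :=
  (forall i, nonempty_set (Xs i) /\ compact_set (Xs i) /\ convex_set (Xs i)) /\
  (forall (th : Th) (i : 'I_N) (x : prof N n),
     (forall j, j != i -> Xs j (block x j)) ->
     convex_fun (fun z => f i (upd x i z) + g (upd x i z) th) /\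
     C1 (fun z => f i (upd x i z) + g (upd x i z) th)) /\
  (forall (th : Th) (i : 'I_N), exists U : prof N n -> Prop,
     open_set U /\ convex_set U /\ (forall x, in_prod Xs x -> U x) /\
     twice_diff_on U (fun x => g x th) /\ twice_diff_on U (f i)) /\
  (exists chif chig : R, chif + chig >= 0 /\
     (forall u v : prof N n,
        dotF (subF u v) (subF (fun p => pf p.1 u p.2) (fun p => pf p.1 v p.2))
          >= chif * nrm2F (subF u v)) /\
     (forall (th : Th) (u v : prof N n),
        dotF (subF u v) (subF (dg u th) (dg v th)) >= chig * nrm2F (subF u v))).

(* The mapping F(x, y), split into its x-block and its y-block. *)
Definition Fx (N n M : nat) (Th : Type) (thetas : 'I_M -> Th)
  (pf : 'I_N -> prof N n -> ('I_n -> R)) (dg : prof N n -> Th -> prof N n)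
  (x : prof N n) (y : 'I_M -> R) : prof N n :=
  fun p => pf p.1 x p.2 + sumF (fun m => y m * dg x (thetas m) p).

Definition Fy (N n M : nat) (Th : Type) (thetas : 'I_M -> Th)
  (g : prof N n -> Th -> R) (x : prof N n) (y : 'I_M -> R) : 'I_M -> R :=
  fun m => - g x (thetas m).

(* Write d = x - x'.  Expanding the pairing of F(x,y) - F(x',y') with
   (x,y) - (x',y') and regrouping the sample terms gives

     d . (P x - P x')  +  sum_m ( y_m D_m(x, x') + y'_m D_m(x', x) ),

   where P is the pseudo-gradient of the f_i and D_m(u, v) is the Bregman
   divergence of g(., theta_m) from u to v.  By Assumption 1(iii) the first
   term is at least chi^f |d|^2, and strong monotonicity of nabla g with
   modulus chi^g bounds every Bregman divergence below by chi^g/2 |d|^2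
   (mean value theorem along the segment).  Since y and y' lie in the
   simplex, the sum is at least chi^g |d|^2, and chi^f + chi^g >= 0 ends it. *)
From mathcomp Require Import ssreflect ssrfun ssrbool eqtype ssrnat seq choice fintype.
From Stdlib Require Import Reals Lra FunctionalExtensionality.
Set Implicit Arguments.
Unset Strict Implicit.
Open Scope R_scope.

Section FiniteSums.
Variable I : finType.

Lemma sumF_ext (h1 h2 : I -> R) : (forall j, h1 j = h2 j) -> sumF h1 = sumF h2.
Proof. by move=> H; rewrite (functional_extensionality _ _ H). Qed.

Lemma sumF0 : sumF (fun _ : I => 0) = 0.
Proof. by rewrite /sumF; elim: (enum I) => //= a s ->; lra. Qed.

Lemma sumF_add (h1 h2 : I -> R) : sumF (fun j => h1 j + h2 j) = sumF h1 + sumF h2.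
Proof. by rewrite /sumF; elim: (enum I) => /= [|a s ->]; lra. Qed.

Lemma sumF_sub (h1 h2 : I -> R) : sumF (fun j => h1 j - h2 j) = sumF h1 - sumF h2.
Proof. by rewrite /sumF; elim: (enum I) => /= [|a s ->]; lra. Qed.

Lemma sumF_scal c (h : I -> R) : sumF (fun j => c * h j) = c * sumF h.
Proof. by rewrite /sumF; elim: (enum I) => /= [|a s ->]; ring. Qed.

Lemma sumF_le (h1 h2 : I -> R) : (forall j, h1 j <= h2 j) -> sumF h1 <= sumF h2.
Proof.
move=> H; rewrite /sumF; elim: (enum I) => /= [|a s IH]; first lra.
by have := H a; lra.
Qed.
End FiniteSums.

Lemma simplex_avg_ge (M : nat) (y a : 'I_M -> R) k :
  simplex y -> (forall j, k <= a j) -> k <= sumF (fun j => y j * a j).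
Proof.
move=> [y_ge0 y_sum1] a_ge.
have -> : k = k * sumF y by rewrite y_sum1 Rmult_1_r.
rewrite -sumF_scal; apply: sumF_le => j.
by rewrite Rmult_comm; apply: Rmult_le_compat_l.
Qed.

Lemma sumF_swap (I J : finType) (h : I -> J -> R) :
  sumF (fun i => sumF (fun j => h i j)) = sumF (fun j => sumF (fun i => h i j)).
Proof.
suff swap_seq (s : seq I) : foldr Rplus 0 (map (fun i => sumF (h i)) s)
    = sumF (fun j => foldr Rplus 0 (map (fun i => h i j) s)) by exact: swap_seq.
elim: s => /= [|a s ->]; first by rewrite sumF0.
by rewrite -sumF_add.
Qed.

Section InnerProduct.
Variable I : finType.
Implicit Types (a b c u v w : I -> R).

Lemma dotF_comm a b : dotF a b = dotF b a.
Proof. by apply: sumF_ext => j; ring. Qed.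

Lemma dotF_scall k a b : dotF (fun j => k * a j) b = k * dotF a b.
Proof. by rewrite /dotF -sumF_scal; apply: sumF_ext => j; ring. Qed.

Lemma dotF_scalr k a b : dotF a (fun j => k * b j) = k * dotF a b.
Proof. by rewrite /dotF -sumF_scal; apply: sumF_ext => j; ring. Qed.

Lemma dotF_subr a b c : dotF a (subF b c) = dotF a b - dotF a c.
Proof. by rewrite /dotF -sumF_sub; apply: sumF_ext => j; rewrite /subF; ring. Qed.

Lemma dotF_flip a u v : dotF a (subF v u) = - dotF (subF u v) a.
Proof.
have -> : forall r, - r = -1 * r by move=> r; ring.
rewrite /dotF -sumF_scal.
by apply: sumF_ext => j; rewrite /subF; ring.
Qed.

Lemma nrm2F_ge0 w : 0 <= nrm2F w.
Proof. by rewrite -(sumF0 I); apply: sumF_le => j; nra. Qed.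

Lemma nrm2F_flip u v : nrm2F (subF v u) = nrm2F (subF u v).
Proof. by apply: sumF_ext => j; rewrite /subF; ring. Qed.

Lemma nrm2F_scal k w : nrm2F (fun j => k * w j) = k * k * nrm2F w.
Proof. by rewrite /nrm2F /dotF -sumF_scal; apply: sumF_ext => j; ring. Qed.

Lemma normF_ge0 w : 0 <= normF w.
Proof. exact: sqrt_pos. Qed.

Lemma normF_scal k w : normF (fun j => k * w j) = Rabs k * normF w.
Proof.
rewrite /normF nrm2F_scal sqrt_mult_alt; last nra.
by rewrite -sqrt_Rsqr_abs.
Qed.
End InnerProduct.

Definition breg (I : finType) (h : (I -> R) -> R) (D : (I -> R) -> (I -> R))
  (u v : I -> R) : R :=
  h v - h u - dotF (D u) (subF v u).

Section BregmanBound.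
Variable I : finType.
Variable h : (I -> R) -> R.
Variable D : (I -> R) -> (I -> R).
Variable c : R.
Hypothesis h_grad : forall x, has_grad h x (D x).
Hypothesis D_mono : forall u v, dotF (subF u v) (subF (D u) (D v)) >= c * nrm2F (subF u v).

Lemma line_deriv (u w : I -> R) t :
  derivable_pt_lim (fun t => h (fun j => u j + t * w j)) t
    (dotF (D (fun j => u j + t * w j)) w).
Proof.
set z := fun t j => u j + t * w j.
move=> eps eps_gt0.
have nw_ge0 := normF_ge0 w.
have eps'_gt0 : 0 < eps / (normF w + 1) by apply: Rdiv_lt_0_compat; lra.
have [delta [delta_gt0 Hdelta]] := h_grad (z t) eps'_gt0.
have delta'_gt0 : 0 < delta / (normF w + 1) by apply: Rdiv_lt_0_compat; lra.
exists (mkposreal _ delta'_gt0) => dt dt_neq0 /= dt_small.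
have step : subF (z (t + dt)) (z t) = fun j => dt * w j.
  by apply: functional_extensionality => j; rewrite /subF /z; ring.
have step_small : Rabs dt * normF w < delta.
  have : Rabs dt * (normF w + 1) < delta.
    have := Rmult_lt_compat_r (normF w + 1) _ _ ltac:(lra) dt_small.
    by rewrite /Rdiv Rmult_assoc Rinv_l; [rewrite Rmult_1_r | lra].
  by have := Rabs_pos dt; nra.
have := Hdelta (z (t + dt)).
rewrite step normF_scal dotF_scalr => /(_ step_small) taylor.
have adt_gt0 : 0 < Rabs dt by apply: Rabs_pos_lt.
set A := h (z (t + dt)) - h (z t) in taylor *.
have -> : A / dt - dotF (D (z t)) w = (A - dt * dotF (D (z t)) w) / dt by field.
rewrite /Rdiv Rabs_mult Rabs_inv.
apply: (Rmult_lt_reg_r (Rabs dt)) => //.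
rewrite Rmult_assoc Rinv_l; last lra.
rewrite Rmult_1_r; apply: (Rle_lt_trans _ _ _ taylor).
have : eps / (normF w + 1) * normF w < eps.
  apply: (Rmult_lt_reg_r (normF w + 1)); first lra.
  rewrite /Rdiv.
  have -> : eps * / (normF w + 1) * normF w * (normF w + 1)
          = eps * normF w * ((normF w + 1) * / (normF w + 1)) by ring.
  by rewrite Rinv_r; lra.
nra.
Qed.

(* Apply the mean value theorem to
   psi(t) = h(u + t w) - t D(u).w - c/2 t^2 |w|^2, w = v - u, whose
   derivative is nonnegative on (0,1) by strong monotonicity. *)
Lemma breg_lower_bound u v : breg h D u v >= c / 2 * nrm2F (subF v u).
Proof.
rewrite /breg; set w := subF v u.
set z := fun t j => u j + t * w j.
set l0 := dotF (D u) w; set n2 := nrm2F w.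
set psi := fun t => h (z t) - (t * l0 + c / 2 * (t * t) * n2).
set psi' := fun t => dotF (D (z t)) w - (l0 + c * t * n2).
have quad_deriv t :
    derivable_pt_lim (fun t => t * l0 + c / 2 * (t * t) * n2) t (l0 + c * t * n2).
  have -> : (fun t => t * l0 + c / 2 * (t * t) * n2) =
            (mult_real_fct l0 id + mult_real_fct (c / 2 * n2) (id * id))%F.
    by apply: functional_extensionality => s;
       rewrite /mult_real_fct /plus_fct /mult_fct /id; ring.
  have := derivable_pt_lim_plus _ _ t _ _
    (derivable_pt_lim_scal _ l0 t _ (derivable_pt_lim_id t))
    (derivable_pt_lim_scal _ (c / 2 * n2) t _
       (derivable_pt_lim_mult _ _ t _ _ (derivable_pt_lim_id t) (derivable_pt_lim_id t))).
  by rewrite /id; have -> : l0 * 1 + c / 2 * n2 * (1 * t + t * 1) = l0 + c * t * n2 by field.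
have psi_deriv t : derivable_pt_lim psi t (psi' t).
  by have := derivable_pt_lim_minus _ _ t _ _ (line_deriv u w t) (quad_deriv t).
have [xi [psi_mvt xi_in]] := MVT_cor2 psi psi' 0 1 Rlt_0_1 (fun t _ => psi_deriv t).
have psi'_ge0 : psi' xi >= 0.
  have := D_mono (z xi) u.
  have -> : subF (z xi) u = fun j => xi * w j.
    by apply: functional_extensionality => j; rewrite /subF /z; ring.
  rewrite dotF_scall nrm2F_scal dotF_subr -/n2 => mono.
  have : dotF w (D (z xi)) - dotF w (D u) >= c * xi * n2.
    by apply: Rle_ge; apply: (Rmult_le_reg_l xi); [lra | nra].
  by rewrite /psi' /l0 (dotF_comm (D (z xi))) (dotF_comm (D u)); lra.
have z1 : z 1 = v by apply: functional_extensionality => j; rewrite /z /w /subF; ring.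
have z0 : z 0 = u by apply: functional_extensionality => j; rewrite /z; ring.
have : psi 1 - psi 0 >= 0 by rewrite psi_mvt; nra.
by rewrite /psi z1 z0; lra.
Qed.
End BregmanBound.

Lemma pairing_split (N n M : nat) (Th : Type) (thetas : 'I_M -> Th)
  (g : prof N n -> Th -> R) (pf : 'I_N -> prof N n -> ('I_n -> R))
  (dg : prof N n -> Th -> prof N n) (x x' : prof N n) (y y' : 'I_M -> R) :
  let gm m := fun z => g z (thetas m) in
  let dgm m := fun z => dg z (thetas m) in
  dotF (subF x x') (subF (Fx thetas pf dg x y) (Fx thetas pf dg x' y'))
  + dotF (subF y y') (subF (Fy thetas g x y) (Fy thetas g x' y'))
  = dotF (subF x x') (subF (fun p => pf p.1 x p.2) (fun p => pf p.1 x' p.2))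
    + sumF (fun m => y m * breg (gm m) (dgm m) x x' + y' m * breg (gm m) (dgm m) x' x).
Proof.
move=> gm dgm; set d := subF x x'.
have sample_pairing yy xx :
    sumF (fun p => d p * sumF (fun m => yy m * dg xx (thetas m) p))
    = sumF (fun m => yy m * dotF d (dg xx (thetas m))).
  transitivity (sumF (fun p => sumF (fun m => yy m * (d p * dg xx (thetas m) p)))).
    by apply: sumF_ext => p; rewrite -sumF_scal; apply: sumF_ext => m; ring.
  rewrite sumF_swap; apply: sumF_ext => m.
  by rewrite /dotF -sumF_scal; apply: sumF_ext => p; ring.
have x_block : dotF d (subF (Fx thetas pf dg x y) (Fx thetas pf dg x' y'))
    = dotF d (subF (fun p => pf p.1 x p.2) (fun p => pf p.1 x' p.2))
      + sumF (fun m => y m * dotF d (dg x (thetas m)))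
      - sumF (fun m => y' m * dotF d (dg x' (thetas m))).
  rewrite -!sample_pairing /dotF -sumF_add -sumF_sub.
  apply: sumF_ext => p; rewrite /subF /Fx.
  (* the two sides spell the projections of p at convertible types *)
  by set a := pf _ x _; set a' := pf _ x' _; ring.
have sample_block :
    sumF (fun m => y m * breg (gm m) (dgm m) x x' + y' m * breg (gm m) (dgm m) x' x)
    = sumF (fun m => y m * dotF d (dg x (thetas m)))
      - sumF (fun m => y' m * dotF d (dg x' (thetas m)))
      + dotF (subF y y') (subF (Fy thetas g x y) (Fy thetas g x' y')).
  rewrite /dotF -sumF_sub -sumF_add; apply: sumF_ext => m.
  rewrite /breg /gm /dgm (dotF_comm (dg x' (thetas m))) dotF_flip -/d /Fy /subF /dotF.
  ring.
by rewrite x_block sample_block; ring.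
Qed.

(* Lemma 1: F is monotone on X x Delta_M.  Only differentiability of g and
   the monotonicity moduli of Assumption 1(iii) are needed. *)
Theorem lemma1 (N n M : nat) (Th : Type)
  (Xs : 'I_N -> ('I_n -> R) -> Prop)
  (f : 'I_N -> prof N n -> R) (g : prof N n -> Th -> R)
  (pf : 'I_N -> prof N n -> ('I_n -> R)) (dg : prof N n -> Th -> prof N n)
  (Hpf : forall (i : 'I_N) (x : prof N n),
           has_grad (fun z => f i (upd x i z)) (block x i) (pf i x))
  (Hdg : forall (th : Th) (x : prof N n), has_grad (fun z => g z th) x (dg x th))
  (HA : Assumption1 Xs f g pf dg)
  (thetas : 'I_M -> Th) :
  forall (x : prof N n) (y : 'I_M -> R) (x' : prof N n) (y' : 'I_M -> R),
    in_prod Xs x -> simplex y -> in_prod Xs x' -> simplex y' ->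
    dotF (subF x x') (subF (Fx thetas pf dg x y) (Fx thetas pf dg x' y'))
    + dotF (subF y y') (subF (Fy thetas g x y) (Fy thetas g x' y')) >= 0.
Proof.
move=> x y x' y' _ y_simplex _ y'_simplex.
case: HA => _ [_ [_ [chif [chig [chi_sum [f_mono g_mono]]]]]].
rewrite pairing_split /=; set nd := nrm2F (subF x x').
have breg_xx' m : chig / 2 * nd <= breg (fun z => g z (thetas m)) (fun z => dg z (thetas m)) x x'.
  by apply: Rge_le; rewrite /nd -nrm2F_flip; exact: breg_lower_bound.
have breg_x'x m : chig / 2 * nd <= breg (fun z => g z (thetas m)) (fun z => dg z (thetas m)) x' x.
  by apply: Rge_le; exact: breg_lower_bound.
have chi_nd : 0 <= (chif + chig) * nd by apply: Rmult_le_pos; [lra | exact: nrm2F_ge0].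
apply: Rle_ge; apply: (Rle_trans _ (chif * nd + (chig / 2 * nd + chig / 2 * nd))); first lra.
apply: Rplus_le_compat; first exact/Rge_le/f_mono.
by rewrite sumF_add; apply: Rplus_le_compat; apply: simplex_avg_ge.
Qed.
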